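(* For any $\vec x,\vec y,\vec z,\vec w,\vec u,\vec v,\vec s,\vec t\in\Lambda_G$, $$\det\begin{pmatrix}\vec x\cdot\vec u&\vec x\cdot\vec v&\vec x\cdot\vec s&\vec x\cdot\vec t\\ \vec y\cdot\vec u&\vec y\cdot\vec v&\vec y\cdot\vec s&\vec y\cdot\vec t\\ \vec z\cdot\vec u&\vec z\cdot\vec v&\vec z\cdot\vec s&\vec z\cdot\vec t\\ \vec w\cdot\vec u&\vec w\cdot\vec v&\vec w\cdot\vec s&\vec w\cdot\vec t\end{pmatrix}=0\quad\text{in }\kappa G^\#.$$
   Context: Let $\kappa$ be a field of characteristic $0$ and $G$ a group. Let $*:\kappa G\to\kappa G$ be the $\kappa$-linear map with $g^*=g^{-1}$, $(\kappa G)^*$ its fixed points, and $A_G$ the quotient of $\kappa G$ by the two-sided ideal generated by all $ab-ba$, $a\in\kappa G$, $b\in(\kappa G)^*$; $*$ descends to $A_G$. Let $\kappa G^\#=\{x\in A_G:x^*=x\}$ and $\Lambda_G=\{x\in A_G:x^*=-x\}$. For $\vec x,\vec y\in\Lambda_G$ define $\vec x\cdot\vec y=-\tfrac12(\vec x\vec y+\vec y\vec x)\in\kappa G^\#$. *)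

From HB Require Import structures.
From mathcomp Require Import all_boot all_order all_algebra all_fingroup.
Set Implicit Arguments. Unset Strict Implicit. Unset Printing Implicit Defensive.
Import Order.TTheory GRing.Theory.
Local Open Scope ring_scope.

(* The group algebra kappa G of an arbitrary (possibly infinite) group G
   (a MathComp [groupType], i.e. a group with decidable equality and choice),
   with elements represented by formal finite sums  sum_i c_i g_i  given as
   lists of pairs (c_i, g_i).  Two formal sums denote the same element of
   kappa G iff they have the same coefficient function ([kg_eq]). *)
Section GroupAlgebra.
Variables (K : fieldType) (G : groupType).

Definition KG := seq (K * G).

Definition coef (a : KG) (g : G) : K := \sum_(p <- a | p.2 == g) p.1.
Definition kg_eq (a b : KG) : Prop := forall g, coef a g = coef b g.

Definition kg_one : KG := [:: (1, 1%g)].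
Definition kg_add (a b : KG) : KG := a ++ b.
Definition kg_scale (c : K) (a : KG) : KG := [seq (c * p.1, p.2) | p <- a].
Definition kg_opp (a : KG) : KG := kg_scale (-1) a.
Definition kg_sub (a b : KG) : KG := kg_add a (kg_opp b).
Definition kg_mul (a b : KG) : KG :=
  [seq (p.1 * q.1, (p.2 * q.2)%g) | p <- a, q <- b].
Definition kg_star (a : KG) : KG := [seq (p.1, (p.2)^-1%g) | p <- a].

(* [inI r] : r lies in the two-sided ideal I of kappa G generated by all
   a b - b a with a in kappa G and b in (kappa G)^* (i.e. b^* = b):
   r is a finite sum of terms p (a b - b a) q. *)
Definition inI (r : KG) : Prop :=
  exists l : seq (KG * KG * KG * KG),
    (forall t, t \in l -> kg_eq (kg_star t.1.2) t.1.2) /\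
    kg_eq r (flatten [seq kg_mul (kg_mul t.1.1.1
                         (kg_sub (kg_mul t.1.1.2 t.1.2) (kg_mul t.1.2 t.1.1.2)))
                         t.2 | t <- l]).

(* equality in A_G = kappa G / I *)
Definition congI (a b : KG) : Prop := inI (kg_sub a b).

(* x (a representative in kappa G) defines an element of Lambda_G *)
Definition inLambda (x : KG) : Prop := congI (kg_star x) (kg_opp x).

Definition kg_dot (x y : KG) : KG :=
  kg_scale (- (1 / 2%:R)) (kg_add (kg_mul x y) (kg_mul y x)).

(* Leibniz determinant of a 4x4 array of elements, products taken in row order *)
Definition kg_det4 (M : 'I_4 -> 'I_4 -> KG) : KG :=
  flatten [seq kg_scale ((-1) ^+ odd_perm s) (\big[kg_mul/kg_one]_(i < 4) M i (s i))
          | s : 'S_4 <- enum [set: 'S_4]].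

End GroupAlgebra.

From HB Require Import structures.
From mathcomp Require Import all_boot all_order all_algebra all_fingroup.
From mathcomp Require Import ring.
From mathcomp Require boolp.
Set Implicit Arguments. Unset Strict Implicit. Unset Printing Implicit Defensive.
Import GRing.Theory.
Local Open Scope ring_scope.

(* In A_G the symmetric elements (x^* = x) are central, and 1/2 exists.  This
   is all one needs to do three-dimensional vector algebra with the skew
   elements: the dot product x.y = -(xy + yx)/2 is a central scalar and the
   cross product x*y = (xy - yx)/2 is again skew.  BAC-CAB and the cyclicity
   of the triple product [x,y,z] = (x*y).z give the Binet-Cauchy formula and
   the linear dependence of any four vectors,
       [y,z,w] x - [x,z,w] y + [x,y,w] z - [x,y,z] w = 0.
   Laplace expansion then turns a 3x3 Gram determinant into [p,q,r][u,v,s]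
   and shows that a 4x4 Gram determinant vanishes.

   The theorem follows by projecting the Leibniz determinant to A_G. *)

Definition det3 (C : pzRingType) (b : nat -> nat -> C) : C :=
  b 0 0 * (b 1 1 * b 2 2 - b 1 2 * b 2 1) - b 0 1 * (b 1 0 * b 2 2 - b 1 2 * b 2 0)
  + b 0 2 * (b 1 0 * b 2 1 - b 1 1 * b 2 0).

Definition minor0 (C : Type) (a : nat -> nat -> C) (k : nat) (i j : nat) : C :=
  a (bump k i) j.+1.

Lemma det4_expand_col0 (C : comPzRingType) (a : nat -> nat -> C) :
  \det (\matrix_(i < 4, j < 4) a i j) =
  a 0 0 * det3 (minor0 a 0) - a 1 0 * det3 (minor0 a 1)
  + a 2 0 * det3 (minor0 a 2) - a 3 0 * det3 (minor0 a 3).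
Proof.
rewrite (expand_det_col _ 0) !big_ord_recr big_ord0 /= /cofactor.
rewrite !(expand_det_row _ 0) !big_ord_recr big_ord0 /= /cofactor.
rewrite !(expand_det_row _ 0) !big_ord_recr !big_ord0 /= /cofactor.
rewrite !det_mx11 !mxE /= /det3 /minor0 /=.
ring.
Qed.

(* A ring R with an additive, antimultiplicative map [st] fixing 1 whose fixed
   points are central, and an element [h] with h * 2 = 1.  The skew elements
   (st x = - x) play the role of vectors. *)
Section VectorAlgebra.
Variables (R : pzRingType) (st : R -> R).
Hypothesis stB : forall x y, st (x - y) = st x - st y.
Hypothesis stM : forall x y, st (x * y) = st y * st x.
Hypothesis st1 : st 1 = 1.
Hypothesis sym_central : forall x y, st x = x -> x * y = y * x.
Variable h : R.
Hypothesis h2 : h * 2%:R = 1.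

Definition central (c : R) := forall y, c * y = y * c.
Definition is_skew (x : R) := st x = - x.

Lemma st0 : st 0 = 0.
Proof. by have := stB 0 0; rewrite !subrr. Qed.

Lemma stN x : st (- x) = - st x.
Proof. by rewrite -sub0r stB st0 sub0r. Qed.

Lemma stD x y : st (x + y) = st x + st y.
Proof. by rewrite -[y]opprK stB !stN !opprK. Qed.

Lemma half_central : central h.
Proof.
have h2' : 2%:R * h = 1 by rewrite -(commr_nat h 2).
move=> y; rewrite -[h * y]mulr1 -h2' !mulrA -[h * y * _]mulrA (commr_nat y).
by rewrite mulrA h2 mul1r.
Qed.

Lemma st_nat n : st n%:R = n%:R.
Proof. by elim: n => [|n IHn]; rewrite ?st0 // -addn1 natrD stD IHn st1. Qed.

Lemma st_half : st h = h.
Proof.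
have : st 2%:R * st h = 1 by rewrite -stM h2 st1.
rewrite st_nat -(commr_nat (st h)) => h2'.
by rewrite -[RHS]mul1r -h2' -mulrA -(commr_nat h) h2 mulr1.
Qed.

Definition anticomm (p q : R) := p * q + q * p.
Definition commut (p q : R) := p * q - q * p.
Definition dot (p q : R) := - (h * anticomm p q).
Definition cross (p q : R) := h * commut p q.

Section Skew.
Variables p q : R.
Hypotheses (skew_p : is_skew p) (skew_q : is_skew q).

Lemma anticomm_sym : st (anticomm p q) = anticomm p q.
Proof. by rewrite /anticomm stD !stM skew_p skew_q !mulrNN addrC. Qed.

Lemma anticomm_central : central (anticomm p q).
Proof. by move=> y; apply: sym_central; apply: anticomm_sym. Qed.

Lemma dot_sym : st (dot p q) = dot p q.
Proof. by rewrite /dot stN stM anticomm_sym st_half half_central. Qed.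

Lemma dot_central : central (dot p q).
Proof. by move=> y; apply: sym_central; apply: dot_sym. Qed.

Lemma cross_skew : is_skew (cross p q).
Proof.
rewrite /is_skew /cross /commut stM stB !stM skew_p skew_q !mulrNN st_half.
by rewrite -half_central -opprB mulrN.
Qed.

End Skew.

Lemma dotC p q : dot p q = dot q p.
Proof. by rewrite /dot /anticomm addrC. Qed.

Lemma crossC p q : cross p q = - cross q p.
Proof. by rewrite /cross /commut -[RHS]mulrN opprB. Qed.

Lemma dotDl x y z : dot (x + y) z = dot x z + dot y z.
Proof. by rewrite /dot /anticomm mulrDl [z * _]mulrDr addrACA mulrDr opprD. Qed.

Lemma dotNl x z : dot (- x) z = - dot x z.
Proof. by rewrite /dot /anticomm mulNr mulrN -opprD mulrN. Qed.

Lemma dotBl x y z : dot (x - y) z = dot x z - dot y z.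
Proof. by rewrite dotDl dotNl. Qed.

Lemma dotBr x y z : dot z (x - y) = dot z x - dot z y.
Proof. by rewrite !(dotC z) dotBl. Qed.

Lemma dot_scalel c x y : central c -> dot (c * x) y = c * dot x y.
Proof.
move=> cc; rewrite /dot /anticomm -mulrA [y * _]mulrA -cc -mulrA -mulrDr.
by rewrite mulrA half_central -mulrA mulrN.
Qed.

Lemma dot_scaler c x y : central c -> dot y (c * x) = c * dot y x.
Proof. by move=> cc; rewrite !(dotC y) dot_scalel. Qed.

(* The Leibniz rule expressing a commutator with a product through
   anticommutators; it is the source of the BAC-CAB identity. *)
Lemma commut_mulr p q r : commut p (q * r) = anticomm p q * r - q * anticomm p r.
Proof.
rewrite /commut /anticomm mulrDl mulrDr !mulrA opprD addrA.
by rewrite addrK.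
Qed.

Lemma commutBr p x y : commut p (x - y) = commut p x - commut p y.
Proof.
rewrite /commut mulrBr mulrBl !opprB addrACA [RHS]addrACA.
by congr (_ + _); apply: addrC.
Qed.

Lemma commut_scaler c p x : central c -> commut p (c * x) = c * commut p x.
Proof. by move=> cc; rewrite /commut mulrBr mulrA -cc !mulrA. Qed.

Section VectorIdentities.
Variables p q r : R.
Hypotheses (skew_p : is_skew p) (skew_q : is_skew q) (skew_r : is_skew r).

Lemma bac_cab : cross p (cross q r) = dot p r * q - dot p q * r.
Proof.
rewrite /cross commut_scaler; last exact: half_central.
rewrite [commut q r]/commut commutBr !commut_mulr.
rewrite -(anticomm_central skew_p skew_r q) -(anticomm_central skew_p skew_q r).
set a := anticomm p q * r; set b := anticomm p r * q.
have -> : a - b - (b - a) = 2%:R * (a - b) by rewrite opprB mulr_natl mulr2n.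
rewrite [h * (2%:R * _)]mulrA h2 mul1r /dot !mulNr -!mulrA.
by rewrite mulrBr opprK addrC.
Qed.

(* The key cancellation behind the cyclicity of the triple product:
   [p,q]r + r[p,q] = p[q,r] + [q,r]p, because pr + rp is central. *)
Lemma anticomm_commut : anticomm (commut p q) r = anticomm p (commut q r).
Proof.
rewrite /anticomm /commut !mulrBl !mulrBr !mulrA.
have := anticomm_central skew_r skew_p q; rewrite /anticomm mulrDl mulrDr !mulrA.
move=> e; rewrite -!addrA; congr (_ + _); rewrite !addrA; congr (_ - _).
apply/eqP; rewrite !(addrC (- _)) subr_eq addrAC eq_sym subr_eq eq_sym.
by rewrite e.
Qed.

Lemma dot_cross_swap : dot (cross p q) r = dot p (cross q r).
Proof.
rewrite /cross dot_scalel ?dot_scaler; try exact: half_central.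
by rewrite /dot anticomm_commut.
Qed.

End VectorIdentities.

Lemma binet_cauchy p q u v :
  is_skew p -> is_skew q -> is_skew u -> is_skew v ->
  dot (cross p q) (cross u v) = dot p u * dot q v - dot p v * dot q u.
Proof.
move=> sp sq su sv.
rewrite (dot_cross_swap q sp (cross_skew su sv)) (bac_cab sq su sv) dotBr.
rewrite !dot_scaler; try exact: dot_central.
by rewrite (dot_central sq sv) (dot_central sq su).
Qed.

Definition triple (p q r : R) := dot (cross p q) r.

Lemma triple_central p q r : is_skew p -> is_skew q -> is_skew r ->
  central (triple p q r).
Proof. by move=> sp sq sr; apply: dot_central => //; apply: cross_skew. Qed.

Lemma triple_cycle p q r : is_skew p -> is_skew q -> is_skew r ->
  triple p q r = triple q r p.
Proof. by move=> sp sq sr; rewrite /triple dot_cross_swap // dotC. Qed.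

(* Any four vectors are linearly dependent, with the triple products of the
   other three as coefficients: expand both sides of
   cross (cross x y) (cross z w) = - cross (cross z w) (cross x y) by BAC-CAB. *)
Lemma four_vectors_dependent x y z w :
  is_skew x -> is_skew y -> is_skew z -> is_skew w ->
  triple y z w * x - triple x z w * y + triple x y w * z - triple x y z * w = 0.
Proof.
move=> sx sy sz sw.
have e := crossC (cross x y) (cross z w).
rewrite (bac_cab (cross_skew sx sy) sz sw) (bac_cab (cross_skew sz sw) sx sy) in e.
rewrite (triple_cycle sy sz sw) (triple_cycle sx sz sw) -addrA.
by rewrite [triple _ _ _ * z - _]e addrN.
Qed.

Lemma dot0l x : dot 0 x = 0.
Proof. by rewrite /dot /anticomm mul0r mulr0 addr0 mulr0 oppr0. Qed.

(* The symmetric elements form a commutative subring: the scalars, in which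
   determinants are computed. *)
Definition symb (x : R) : bool := st x == x.

Record scalar := Scalar { scalar_val :> R; _ : symb scalar_val }.
HB.instance Definition _ := [isSub for scalar_val].
HB.instance Definition _ := [Choice of scalar by <:].

Lemma symb_subring_closed : subring_closed symb.
Proof.
split=> [|x y|x y]; rewrite !unfold_in /symb ?st1 //.
  by move=> /eqP sx /eqP sy; rewrite stB sx sy.
by move=> /eqP sx /eqP sy; rewrite stM sx sy; apply/eqP/esym/sym_central.
Qed.
HB.instance Definition _ :=
  GRing.SubChoice_isSubPzRing.Build R symb scalar symb_subring_closed.

Lemma scalar_mulC : commutative (@GRing.mul scalar).
Proof. by move=> a b; apply: val_inj; apply: sym_central; apply/eqP; case: a. Qed.
HB.instance Definition _ := GRing.PzRing_hasCommutativeMul.Build scalar scalar_mulC.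

Definition sdot (p q : R) : scalar := insubd 0 (dot p q).
Definition striple (p q r : R) : scalar := sdot (cross p q) r.

Lemma val_sdot p q : is_skew p -> is_skew q -> val (sdot p q) = dot p q.
Proof. by move=> sp sq; rewrite insubdK // unfold_in /symb dot_sym. Qed.

Lemma sdot_binet_cauchy p q u v :
  is_skew p -> is_skew q -> is_skew u -> is_skew v ->
  sdot (cross p q) (cross u v) = sdot p u * sdot q v - sdot p v * sdot q u.
Proof.
move=> sp sq su sv; apply: val_inj.
by rewrite rmorphB !rmorphM /= !val_sdot ?binet_cauchy //; apply: cross_skew.
Qed.

Lemma four_vectors_dependent_sdot x y z w b :
  is_skew x -> is_skew y -> is_skew z -> is_skew w -> is_skew b ->
  striple y z w * sdot x b - striple x z w * sdot y b
  + striple x y w * sdot z b - striple x y z * sdot w b = 0.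
Proof.
move=> sx sy sz sw sb; apply: val_inj.
move: (four_vectors_dependent sx sy sz sw) => /(congr1 (dot^~ b)).
rewrite dot0l dotBl dotDl dotBl !dot_scalel; try exact: triple_central.
move=> e; rewrite rmorph0 rmorphB rmorphD !rmorphB !rmorphM /= !val_sdot //.
all: exact: cross_skew.
Qed.

Definition gram (X Y : seq R) (i j : nat) : scalar := sdot (nth 0 X i) (nth 0 Y j).

Lemma gram3_det p q r u v s :
  is_skew p -> is_skew q -> is_skew r -> is_skew u -> is_skew v -> is_skew s ->
  det3 (gram [:: p; q; r] [:: u; v; s]) = striple p q r * striple u v s.
Proof.
move=> sp sq sr su sv ss; have suv := cross_skew su sv.
have e := four_vectors_dependent_sdot sp sq sr suv ss.
rewrite /striple !sdot_binet_cauchy // in e.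
by rewrite -[LHS]subr0 -e /det3 /gram /striple /=; ring.
Qed.

Lemma gram4_det x y z w u v s t :
  is_skew x -> is_skew y -> is_skew z -> is_skew w ->
  is_skew u -> is_skew v -> is_skew s -> is_skew t ->
  \det (\matrix_(i < 4, j < 4) gram [:: x; y; z; w] [:: u; v; s; t] i j) = 0.
Proof.
move=> sx sy sz sw su sv ss st'.
rewrite det4_expand_col0.
transitivity (sdot x u * det3 (gram [:: y; z; w] [:: v; s; t])
  - sdot y u * det3 (gram [:: x; z; w] [:: v; s; t])
  + sdot z u * det3 (gram [:: x; y; w] [:: v; s; t])
  - sdot w u * det3 (gram [:: x; y; z] [:: v; s; t])).
  (* the minors of a Gram array are the Gram arrays of the remaining vectors *)
  by [].
rewrite !gram3_det //.
have e := four_vectors_dependent_sdot sx sy sz sw su.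
by rewrite -(mulr0 (striple v s t)) -e; ring.
Qed.

Lemma gram4_leibniz x y z w u v s t :
  is_skew x -> is_skew y -> is_skew z -> is_skew w ->
  is_skew u -> is_skew v -> is_skew s -> is_skew t ->
  \sum_(g : 'S_4) (-1) ^+ g *
    \prod_(i < 4) dot (nth 0 [:: x; y; z; w] i) (nth 0 [:: u; v; s; t] (g i))
  = 0.
Proof.
move=> sx sy sz sw su sv ss st'.
have skew_nth (a b c e : R) (i : 'I_4) : is_skew a -> is_skew b -> is_skew c ->
    is_skew e -> is_skew (nth 0 [:: a; b; c; e] i).
  by case: i => [[|[|[|[|]]]]].
have e := congr1 val (gram4_det sx sy sz sw su sv ss st'); rewrite rmorph0 in e.
rewrite -[RHS]e /determinant rmorph_sum; apply: eq_bigr => g _.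
rewrite rmorphM rmorph_sign rmorph_prod; congr (_ * _); apply: eq_bigr => i _.
by rewrite mxE /gram; symmetry; apply: val_sdot; apply: skew_nth.
Qed.

End VectorAlgebra.

Record setoidRing (T : Type) := SetoidRing {
  sr_eq : T -> T -> Prop;
  sr_zero : T; sr_opp : T -> T; sr_add : T -> T -> T;
  sr_one : T; sr_mul : T -> T -> T;
  sr_refl : forall a, sr_eq a a;
  sr_sym : forall a b, sr_eq a b -> sr_eq b a;
  sr_trans : forall a b c, sr_eq a b -> sr_eq b c -> sr_eq a c;
  sr_oppE : forall a a', sr_eq a a' -> sr_eq (sr_opp a) (sr_opp a');
  sr_addE : forall a a' b b', sr_eq a a' -> sr_eq b b' ->
    sr_eq (sr_add a b) (sr_add a' b');
  sr_mulE : forall a a' b b', sr_eq a a' -> sr_eq b b' ->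
    sr_eq (sr_mul a b) (sr_mul a' b');
  sr_addA : forall a b c, sr_eq (sr_add (sr_add a b) c) (sr_add a (sr_add b c));
  sr_addC : forall a b, sr_eq (sr_add a b) (sr_add b a);
  sr_add0 : forall a, sr_eq (sr_add sr_zero a) a;
  sr_addN : forall a, sr_eq (sr_add (sr_opp a) a) sr_zero;
  sr_mulA : forall a b c, sr_eq (sr_mul (sr_mul a b) c) (sr_mul a (sr_mul b c));
  sr_mul1 : forall a, sr_eq (sr_mul sr_one a) a;
  sr_mulr1 : forall a, sr_eq (sr_mul a sr_one) a;
  sr_mulDl : forall a b c,
    sr_eq (sr_mul (sr_add a b) c) (sr_add (sr_mul a c) (sr_mul b c));
  sr_mulDr : forall a b c,
    sr_eq (sr_mul a (sr_add b c)) (sr_add (sr_mul a b) (sr_mul a c))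
}.

Section SetoidQuotient.
Local Open Scope quotient_scope.
Variables (T : choiceType) (d : setoidRing T).
Local Notation E := (sr_eq d).

Definition sr_eqb (a b : T) : bool := boolp.asbool (E a b).

Lemma sr_eqb_equiv : equiv_class_of sr_eqb.
Proof.
split=> [a|a b|b a c]; rewrite /sr_eqb.
- exact/boolp.asboolP/sr_refl.
- by apply/boolp.asboolP/boolp.asboolP; apply: sr_sym.
- by move=> /boolp.asboolP ab /boolp.asboolP bc; apply/boolp.asboolP/(sr_trans ab bc).
Qed.
Canonical sr_eqb_equiv_rel := EquivRelPack sr_eqb_equiv.
Canonical sr_eqb_encModRel := defaultEncModRel sr_eqb.

Definition quot := {eq_quot sr_eqb}.
HB.instance Definition _ : EqQuotient T sr_eqb quot := EqQuotient.on quot.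
HB.instance Definition _ := Choice.on quot.

Definition qpi (a : T) : quot := \pi_quot a.

Lemma qpi_eq a b : qpi a = qpi b <-> E a b.
Proof. by split=> [/eqquotP/boolp.asboolP|ab]; last exact/eqquotP/boolp.asboolP. Qed.

Lemma qpi_reprK x : qpi (generic_quotient.repr x) = x.
Proof. exact: reprK. Qed.

Lemma qpi_repr a : E (generic_quotient.repr (qpi a)) a.
Proof. by apply/qpi_eq; rewrite qpi_reprK. Qed.

Lemma qpi_surj (Q : quot -> Prop) : (forall a, Q (qpi a)) -> forall x, Q x.
Proof. by move=> Qpi x; rewrite -[x]reprK; apply: Qpi. Qed.

Lemma qpi_lift1 (f : T -> T) : (forall a b, E a b -> E (f a) (f b)) ->
  forall a, lift_op1 quot f (qpi a) = qpi (f a).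
Proof. by move=> fE a; unlock; apply/qpi_eq/fE/qpi_repr. Qed.

Lemma qpi_lift2 (f : T -> T -> T) :
  (forall a a' b b', E a a' -> E b b' -> E (f a b) (f a' b')) ->
  forall a b, lift_op2 quot f (qpi a) (qpi b) = qpi (f a b).
Proof. by move=> fE a b; unlock; apply/qpi_eq/fE; apply: qpi_repr. Qed.

Definition qzero : quot := qpi (sr_zero d).
Definition qone : quot := qpi (sr_one d).
Definition qopp := lift_op1 quot (sr_opp d).
Definition qadd := lift_op2 quot (sr_add d).
Definition qmul := lift_op2 quot (sr_mul d).

Lemma qpi_opp a : qopp (qpi a) = qpi (sr_opp d a).
Proof. exact/qpi_lift1/sr_oppE. Qed.
Lemma qpi_add a b : qadd (qpi a) (qpi b) = qpi (sr_add d a b).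
Proof. exact/qpi_lift2/sr_addE. Qed.
Lemma qpi_mul a b : qmul (qpi a) (qpi b) = qpi (sr_mul d a b).
Proof. exact/qpi_lift2/sr_mulE. Qed.

Lemma qaddA : associative qadd.
Proof.
by elim/qpi_surj=> a; elim/qpi_surj=> b; elim/qpi_surj=> c;
  rewrite !qpi_add; apply/qpi_eq/sr_sym; apply: sr_addA.
Qed.
Lemma qaddC : commutative qadd.
Proof.
by elim/qpi_surj=> a; elim/qpi_surj=> b; rewrite !qpi_add; apply/qpi_eq; apply: sr_addC.
Qed.
Lemma qadd0 : left_id qzero qadd.
Proof. by elim/qpi_surj=> a; rewrite qpi_add; apply/qpi_eq; apply: sr_add0. Qed.
Lemma qaddN : left_inverse qzero qopp qadd.
Proof. by elim/qpi_surj=> a; rewrite qpi_opp qpi_add; apply/qpi_eq; apply: sr_addN. Qed.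
HB.instance Definition _ := GRing.isZmodule.Build quot qaddA qaddC qadd0 qaddN.

Lemma qmulA : associative qmul.
Proof.
by elim/qpi_surj=> a; elim/qpi_surj=> b; elim/qpi_surj=> c;
  rewrite !qpi_mul; apply/qpi_eq/sr_sym; apply: sr_mulA.
Qed.
Lemma qmul1 : left_id qone qmul.
Proof. by elim/qpi_surj=> a; rewrite qpi_mul; apply/qpi_eq; apply: sr_mul1. Qed.
Lemma qmulr1 : right_id qone qmul.
Proof. by elim/qpi_surj=> a; rewrite qpi_mul; apply/qpi_eq; apply: sr_mulr1. Qed.
Lemma qmulDl : left_distributive qmul qadd.
Proof.
by elim/qpi_surj=> a; elim/qpi_surj=> b; elim/qpi_surj=> c;
  rewrite !(qpi_add, qpi_mul); apply/qpi_eq; apply: sr_mulDl.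
Qed.
Lemma qmulDr : right_distributive qmul qadd.
Proof.
by elim/qpi_surj=> a; elim/qpi_surj=> b; elim/qpi_surj=> c;
  rewrite !(qpi_add, qpi_mul); apply/qpi_eq; apply: sr_mulDr.
Qed.
HB.instance Definition _ :=
  GRing.Zmodule_isPzRing.Build quot qmulA qmul1 qmulr1 qmulDl qmulDr.

Lemma qpiD a b : qpi (sr_add d a b) = qpi a + qpi b. Proof. by rewrite -qpi_add. Qed.
Lemma qpiM a b : qpi (sr_mul d a b) = qpi a * qpi b. Proof. by rewrite -qpi_mul. Qed.
Lemma qpiN a : qpi (sr_opp d a) = - qpi a. Proof. by rewrite -qpi_opp. Qed.

End SetoidQuotient.

Section GroupAlgebra.
Variables (K : fieldType) (G : groupType).
Implicit Types a b c : KG K G.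

Lemma coefE a g : coef a g = \sum_(p <- a) (if p.2 == g then p.1 else 0).
Proof. by rewrite /coef big_mkcond. Qed.

Lemma coef_nil g : coef ([::] : KG K G) g = 0.
Proof. by rewrite /coef big_nil. Qed.

Lemma coef_cat a b g : coef (a ++ b) g = coef a g + coef b g.
Proof. by rewrite /coef big_cat. Qed.

Lemma coef_seq1 (k : K) (x : G) g : coef [:: (k, x)] g = if x == g then k else 0.
Proof. by rewrite coefE big_seq1. Qed.

Lemma coef_scale k a g : coef (kg_scale k a) g = k * coef a g.
Proof.
rewrite !coefE big_map mulr_sumr.
by apply: eq_bigr => p _ /=; case: eqP; rewrite ?mulr0.
Qed.

Lemma coef_opp a g : coef (kg_opp a) g = - coef a g.
Proof. by rewrite coef_scale mulN1r. Qed.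

Lemma coef_star a g : coef (kg_star a) g = coef a g^-1%g.
Proof.
rewrite !coefE big_map; apply: eq_bigr => p _ /=.
by rewrite -(inj_eq invg_inj) invgK.
Qed.

Lemma coef_mulr a b g :
  coef (kg_mul a b) g = \sum_(q <- b) coef a (g * q.2^-1)%g * q.1.
Proof.
rewrite coefE /kg_mul big_allpairs_dep exchange_big /=.
apply: eq_bigr => q _; rewrite coefE mulr_suml; apply: eq_bigr => p _ /=.
have -> : (p.2 * q.2 == g)%g = (p.2 == g * q.2^-1)%g.
  by apply/eqP/eqP => [<-|->]; rewrite ?mulgK ?mulgVK.
by case: eqP; rewrite ?mul0r.
Qed.

Lemma coef_mull a b g :
  coef (kg_mul a b) g = \sum_(p <- a) p.1 * coef b (p.2^-1 * g)%g.
Proof.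
rewrite coefE /kg_mul big_allpairs_dep /=.
apply: eq_bigr => p _; rewrite coefE mulr_sumr; apply: eq_bigr => q _ /=.
have -> : (p.2 * q.2 == g)%g = (q.2 == p.2^-1 * g)%g.
  by apply/eqP/eqP => [<-|->]; rewrite ?mulKg ?mulKVg.
by case: eqP; rewrite ?mulr0.
Qed.

Lemma kg_eq_mul a a' b b' :
  kg_eq a a' -> kg_eq b b' -> kg_eq (kg_mul a b) (kg_mul a' b').
Proof.
move=> aa' bb' g; rewrite coef_mulr.
under eq_bigr do rewrite aa'.
by rewrite -coef_mulr !coef_mull; apply: eq_bigr => p _; rewrite bb'.
Qed.

Lemma kg_mulA a b c : kg_eq (kg_mul (kg_mul a b) c) (kg_mul a (kg_mul b c)).
Proof.
move=> g; rewrite coef_mulr.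
under eq_bigr do rewrite coef_mulr mulr_suml.
rewrite coef_mulr /kg_mul big_allpairs_dep /= exchange_big /=.
by apply: eq_bigr => q _; apply: eq_bigr => r _; rewrite invMg mulgA mulrA.
Qed.

Definition kg_setoid : setoidRing (KG K G).
Proof.
apply: (@SetoidRing _ (@kg_eq K G) [::] (@kg_opp K G) (@kg_add K G)
  (kg_one K G) (@kg_mul K G)); rewrite /kg_eq.
- by [].
- by move=> a b ab g.
- by move=> a b c ab bc g; rewrite ab bc.
- by move=> a a' aa' g; rewrite !coef_opp aa'.
- by move=> a a' b b' aa' bb' g; rewrite !coef_cat aa' bb'.
- exact: kg_eq_mul.
- by move=> a b c g; rewrite !coef_cat addrA.
- by move=> a b g; rewrite !coef_cat addrC.
- by move=> a g; rewrite coef_cat coef_nil add0r.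
- by move=> a g; rewrite coef_cat coef_opp coef_nil addNr.
- exact: kg_mulA.
- by move=> a g; rewrite coef_mull big_seq1 /= invg1 mul1g mul1r.
- by move=> a g; rewrite coef_mulr big_seq1 /= invg1 mulg1 mulr1.
- move=> a b c g; rewrite coef_cat !coef_mulr -big_split.
  by apply: eq_bigr => q _; rewrite coef_cat mulrDl.
- move=> a b c g; rewrite coef_cat !coef_mull -big_split.
  by apply: eq_bigr => p _; rewrite coef_cat mulrDr.
Defined.

Definition KGring := quot kg_setoid.
Definition piKG (a : KG K G) : KGring := qpi kg_setoid a.

Lemma piKG_surj (P : KGring -> Prop) : (forall a, P (piKG a)) -> forall x, P x.
Proof. exact: qpi_surj. Qed.

Lemma piKG_repr x : piKG (generic_quotient.repr x) = x.
Proof. exact: qpi_reprK. Qed.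

Lemma piKG_eq a b : piKG a = piKG b <-> kg_eq a b. Proof. exact: qpi_eq. Qed.
Lemma piKG_cat a b : piKG (a ++ b) = piKG a + piKG b. Proof. exact: qpiD. Qed.
Lemma piKG_mul a b : piKG (kg_mul a b) = piKG a * piKG b. Proof. exact: qpiM. Qed.
Lemma piKG_opp a : piKG (kg_opp a) = - piKG a. Proof. exact: qpiN. Qed.
Lemma piKG_one : piKG (kg_one K G) = 1. Proof. by []. Qed.

Lemma piKG_flatten (L : seq (KG K G)) : piKG (flatten L) = \sum_(r <- L) piKG r.
Proof. by elim: L => [|r L IHL]; rewrite ?big_nil //= piKG_cat IHL big_cons. Qed.

Definition starKG : KGring -> KGring := lift_op1 KGring (@kg_star K G).

Lemma starKG_pi a : starKG (piKG a) = piKG (kg_star a).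
Proof. by apply: qpi_lift1 => a' b' ab g; rewrite !coef_star ab. Qed.

Lemma starKG_B x y : starKG (x - y) = starKG x - starKG y.
Proof.
elim/piKG_surj: x => a; elim/piKG_surj: y => b.
rewrite -piKG_opp -piKG_cat !starKG_pi -piKG_opp -piKG_cat.
by apply/piKG_eq => g; rewrite !(coef_star, coef_cat, coef_opp).
Qed.

Lemma starKG_M x y : starKG (x * y) = starKG y * starKG x.
Proof.
elim/piKG_surj: x => a; elim/piKG_surj: y => b.
rewrite -piKG_mul !starKG_pi -piKG_mul; apply/piKG_eq => g.
rewrite coef_star coef_mulr coef_mull /kg_star big_map.
by apply: eq_bigr => q _ /=; rewrite coef_star invMg !invgK mulrC.
Qed.

Lemma starKG_K : involutive starKG.
Proof.
by elim/piKG_surj=> a; rewrite !starKG_pi; apply/piKG_eq => g; rewrite !coef_star invgK.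
Qed.

Lemma starKG_1 : starKG 1 = 1.
Proof.
rewrite -piKG_one starKG_pi; apply/piKG_eq => g.
by rewrite coef_star !coef_seq1 -(inj_eq invg_inj) invgK invg1.
Qed.

Definition kscal (c : K) : KGring := piKG [:: (c, 1%g)].

Lemma kscal_is_zmod_morphism : zmod_morphism kscal.
Proof.
move=> c c'; rewrite -piKG_opp -piKG_cat; apply/piKG_eq => g.
by rewrite coef_cat coef_opp !coef_seq1; case: eqP; rewrite ?subr0.
Qed.

Lemma kscal_is_monoid_morphism : monoid_morphism kscal.
Proof.
split=> // c c'; rewrite -piKG_mul; apply/piKG_eq => g.
rewrite coef_mull big_seq1 /= invg1 mul1g !coef_seq1.
by case: eqP; rewrite ?mulr0.
Qed.

HB.instance Definition _ := GRing.isZmodMorphism.Build K KGring kscal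
  kscal_is_zmod_morphism.
HB.instance Definition _ := GRing.isMonoidMorphism.Build K KGring kscal
  kscal_is_monoid_morphism.

Lemma piKG_scale (k : K) a : piKG (kg_scale k a) = kscal k * piKG a.
Proof.
rewrite -piKG_mul; apply/piKG_eq => g.
by rewrite coef_scale coef_mull big_seq1 /= invg1 mul1g.
Qed.

Lemma kscal_central (k : K) x : kscal k * x = x * kscal k.
Proof.
elim/piKG_surj: x => a; rewrite -!piKG_mul; apply/piKG_eq => g.
by rewrite coef_mull coef_mulr !big_seq1 /= invg1 mul1g mulg1 mulrC.
Qed.

Lemma starKG_scal (k : K) : starKG (kscal k) = kscal k.
Proof. by rewrite starKG_pi /kg_star /= invg1. Qed.

End GroupAlgebra.

Section IdealQuotient.
Variables (R : pzRingType) (P : R -> Prop).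
Hypotheses (P0 : P 0) (PD : forall x y, P x -> P y -> P (x + y)).
Hypotheses (PMl : forall c x, P x -> P (c * x)) (PMr : forall c x, P x -> P (x * c)).

Lemma idealN x : P x -> P (- x).
Proof. by move=> Px; rewrite -mulN1r; apply: PMl. Qed.

Lemma ideal_eq x y : x = y -> P (x - y).
Proof. by move=> ->; rewrite subrr. Qed.

Definition ideal_setoid : setoidRing R.
Proof.
apply: (@SetoidRing _ (fun a b => P (a - b)) 0 -%R +%R 1 *%R)
  => [a|a b|a b c|a a'|||||||||||].
- exact: ideal_eq.
- by move=> Pab; rewrite -opprB; apply: idealN.
- by move=> Pab Pbc; rewrite -(subrKA b); apply: PD.
- by move=> Paa'; rewrite -opprD; apply: idealN.
- by move=> a a' b b' Paa' Pbb'; rewrite opprD addrACA; apply: PD.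
- move=> a a' b b' Paa' Pbb'.
  have -> : a * b - a' * b' = (a - a') * b + a' * (b - b').
    by rewrite mulrBl mulrBr addrA subrK.
  by apply: PD; [apply: PMr | apply: PMl].
- by move=> a b c; apply/ideal_eq/esym/addrA.
- by move=> a b; apply/ideal_eq/addrC.
- by move=> a; apply/ideal_eq/add0r.
- by move=> a; apply/ideal_eq/addNr.
- by move=> a b c; apply/ideal_eq/esym/mulrA.
- by move=> a; apply/ideal_eq/mul1r.
- by move=> a; apply/ideal_eq/mulr1.
- by move=> a b c; apply/ideal_eq/mulrDl.
- by move=> a b c; apply/ideal_eq/mulrDr.
Defined.

Definition ideal_quot := quot ideal_setoid.
Definition ideal_pi (a : R) : ideal_quot := qpi ideal_setoid a.

Lemma ideal_pi_is_zmod_morphism : zmod_morphism ideal_pi.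
Proof. by move=> a b; rewrite /ideal_pi (qpiD ideal_setoid) (qpiN ideal_setoid). Qed.

Lemma ideal_pi_is_monoid_morphism : monoid_morphism ideal_pi.
Proof. by split=> // a b; rewrite /ideal_pi (qpiM ideal_setoid). Qed.

HB.instance Definition _ := GRing.isZmodMorphism.Build R ideal_quot ideal_pi
  ideal_pi_is_zmod_morphism.
HB.instance Definition _ := GRing.isMonoidMorphism.Build R ideal_quot ideal_pi
  ideal_pi_is_monoid_morphism.

Lemma ideal_pi_surj (Q : ideal_quot -> Prop) :
  (forall a, Q (ideal_pi a)) -> forall x, Q x.
Proof. exact: qpi_surj. Qed.

Lemma ideal_pi_eq0 a : ideal_pi a = 0 <-> P a.
Proof. by rewrite -(rmorph0 ideal_pi) (qpi_eq ideal_setoid) /= subr0. Qed.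

Variable st : R -> R.
Hypothesis stB : forall x y, st (x - y) = st x - st y.
Hypothesis stM : forall x y, st (x * y) = st y * st x.
Hypothesis st1 : st 1 = 1.
Hypothesis Pst : forall x, P x -> P (st x).

Definition ideal_star : ideal_quot -> ideal_quot := lift_op1 ideal_quot st.

Lemma ideal_star_pi a : ideal_star (ideal_pi a) = ideal_pi (st a).
Proof. by apply: qpi_lift1 => a' b' /= Pab; rewrite -stB; apply: Pst. Qed.

Lemma ideal_starB x y : ideal_star (x - y) = ideal_star x - ideal_star y.
Proof.
elim/ideal_pi_surj: x => a; elim/ideal_pi_surj: y => b.
by rewrite -rmorphB !ideal_star_pi stB rmorphB.
Qed.

Lemma ideal_starM x y : ideal_star (x * y) = ideal_star y * ideal_star x.
Proof.
elim/ideal_pi_surj: x => a; elim/ideal_pi_surj: y => b.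
by rewrite -rmorphM !ideal_star_pi stM rmorphM.
Qed.

Lemma ideal_star1 : ideal_star 1 = 1.
Proof. by rewrite -(rmorph1 ideal_pi) ideal_star_pi st1. Qed.

End IdealQuotient.

Section SymCommIdeal.
Variables (K : fieldType) (G : groupType).
Local Notation A := (KGring K G).

Inductive sym_comm_ideal : A -> Prop :=
| SCI0 : sym_comm_ideal 0
| SCIgen p a b q : starKG b = b -> sym_comm_ideal (p * (a * b - b * a) * q)
| SCIadd x y : sym_comm_ideal x -> sym_comm_ideal y -> sym_comm_ideal (x + y).

Lemma sci_mull c x : sym_comm_ideal x -> sym_comm_ideal (c * x).
Proof.
elim=> [|p a b q sb|x1 x2 _ IH1 _ IH2]; first by rewrite mulr0; apply: SCI0.
  by rewrite !mulrA; apply: SCIgen.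
by rewrite mulrDr; apply: SCIadd.
Qed.

Lemma sci_mulr c x : sym_comm_ideal x -> sym_comm_ideal (x * c).
Proof.
elim=> [|p a b q sb|x1 x2 _ IH1 _ IH2]; first by rewrite mul0r; apply: SCI0.
  by rewrite -mulrA; apply: SCIgen.
by rewrite mulrDl; apply: SCIadd.
Qed.

Lemma sci_star x : sym_comm_ideal x -> sym_comm_ideal (starKG x).
Proof.
elim=> [|p a b q sb|x1 x2 _ IH1 _ IH2].
- by rewrite (st0 (@starKG_B K G)); apply: SCI0.
- rewrite !starKG_M (starKG_B (_ * _)) !starKG_M sb mulrA -opprB mulrN -mulNr.
  exact: SCIgen.
- by rewrite (stD (@starKG_B K G)); apply: SCIadd.
Qed.

Definition kg_gen (t : KG K G * KG K G * KG K G * KG K G) : KG K G :=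
  kg_mul (kg_mul t.1.1.1 (kg_sub (kg_mul t.1.1.2 t.1.2) (kg_mul t.1.2 t.1.1.2))) t.2.

Lemma piKG_gen t : piKG (kg_gen t) =
  piKG t.1.1.1 * (piKG t.1.1.2 * piKG t.1.2 - piKG t.1.2 * piKG t.1.1.2) * piKG t.2.
Proof. by rewrite /kg_gen !piKG_mul /kg_sub /kg_add piKG_cat piKG_opp !piKG_mul. Qed.

Lemma sym_comm_ideal_spanned x : sym_comm_ideal x ->
  exists l, (forall t, t \in l -> kg_eq (kg_star t.1.2) t.1.2)
            /\ piKG (flatten [seq kg_gen t | t <- l]) = x.
Proof.
elim=> [|p a b q sb|x1 x2 _ [l1 [s1 e1]] _ [l2 [s2 e2]]].
- by exists [::]; split.
- exists [:: (generic_quotient.repr p, generic_quotient.repr a,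
      generic_quotient.repr b, generic_quotient.repr q)]; split.
    move=> t; rewrite inE => /eqP -> /=; apply/piKG_eq.
    by rewrite -starKG_pi !piKG_repr.
  by rewrite /= cats0 piKG_gen !piKG_repr.
- exists (l1 ++ l2); split; last by rewrite map_cat flatten_cat piKG_cat e1 e2.
  by move=> t; rewrite mem_cat => /orP [/s1|/s2].
Qed.

Lemma inI_sym_comm_ideal r : inI r <-> sym_comm_ideal (piKG r).
Proof.
split=> [[l [sym_l /piKG_eq ->]]|/sym_comm_ideal_spanned [l [sym_l e]]]; last first.
  by exists l; split=> //; apply/piKG_eq; rewrite e.
rewrite [flatten _]/(flatten [seq kg_gen t | t <- l]) piKG_flatten big_map.
elim: l sym_l => [|t l IHl] sym_l; first by rewrite big_nil; apply: SCI0.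
rewrite big_cons piKG_gen; apply: SCIadd.
  by apply: SCIgen; rewrite starKG_pi; apply/piKG_eq/sym_l; rewrite inE eqxx.
by apply: IHl => t' lt'; apply: sym_l; rewrite inE lt' orbT.
Qed.
End SymCommIdeal.

Section GroupAlgebraQuotient.
Variables (K : fieldType) (G : groupType).
Local Notation I := (@sym_comm_ideal K G).

Definition AG :=
  ideal_quot (@SCI0 K G) (@SCIadd K G) (@sci_mull K G) (@sci_mulr K G).
Local Notation piAG :=
  (ideal_pi (@SCI0 K G) (@SCIadd K G) (@sci_mull K G) (@sci_mulr K G)).
Definition starAG : AG -> AG := @ideal_star _ _
  (@SCI0 K G) (@SCIadd K G) (@sci_mull K G) (@sci_mulr K G) (@starKG K G).
Definition toAG (a : KG K G) : AG := piAG (piKG a).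

Lemma starAG_pi x : starAG (piAG x) = piAG (starKG x).
Proof. by apply: ideal_star_pi; [apply: starKG_B | apply: sci_star]. Qed.
Lemma starAG_B x y : starAG (x - y) = starAG x - starAG y.
Proof. by apply: ideal_starB; [apply: starKG_B | apply: sci_star]. Qed.
Lemma starAG_M x y : starAG (x * y) = starAG y * starAG x.
Proof. by apply: ideal_starM; [apply: starKG_B | apply: starKG_M | apply: sci_star]. Qed.
Lemma starAG_1 : starAG 1 = 1.
Proof. by apply: ideal_star1; [apply: starKG_B | apply: starKG_1 | apply: sci_star]. Qed.

Lemma piAG_surj (Q : AG -> Prop) : (forall x, Q (piAG x)) -> forall y, Q y.
Proof. exact: ideal_pi_surj. Qed.

Lemma toAG_eq0 r : toAG r = 0 <-> inI r.
Proof. by rewrite inI_sym_comm_ideal; apply: ideal_pi_eq0. Qed.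

Lemma toAG_star a : toAG (kg_star a) = starAG (toAG a).
Proof. by rewrite /toAG starAG_pi starKG_pi. Qed.

Lemma toAG_add a b : toAG (kg_add a b) = toAG a + toAG b.
Proof. by rewrite /toAG piKG_cat rmorphD. Qed.

Lemma toAG_opp a : toAG (kg_opp a) = - toAG a.
Proof. by rewrite /toAG piKG_opp rmorphN. Qed.

Lemma toAG_mul a b : toAG (kg_mul a b) = toAG a * toAG b.
Proof. by rewrite /toAG piKG_mul rmorphM. Qed.

Lemma toAG_scale k a : toAG (kg_scale k a) = piAG (kscal G k) * toAG a.
Proof. by rewrite /toAG piKG_scale rmorphM. Qed.

Lemma toAG_flatten (L : seq (KG K G)) : toAG (flatten L) = \sum_(r <- L) toAG r.
Proof. by rewrite /toAG piKG_flatten rmorph_sum. Qed.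

Lemma toAG_nth (l : seq (KG K G)) i : toAG (nth [::] l i) = nth 0 (map toAG l) i.
Proof. by elim: l i => [|a l IHl] [|i] //=; rewrite /toAG rmorph0. Qed.

Lemma inLambda_skew x : inLambda x -> is_skew starAG (toAG x).
Proof.
move/toAG_eq0; rewrite /kg_sub toAG_add !toAG_opp toAG_star opprK.
by move=> /eqP; rewrite addr_eq0 => /eqP.
Qed.

Definition halfAG : AG := piAG (kscal G (1 / 2%:R)).

Lemma toAG_dot a b : toAG (kg_dot a b) = dot halfAG (toAG a) (toAG b).
Proof. by rewrite /kg_dot toAG_scale toAG_add !toAG_mul !rmorphN mulNr. Qed.

Lemma toAG_det4 (M : 'I_4 -> 'I_4 -> KG K G) :
  toAG (kg_det4 M) = \sum_(g : 'S_4) (-1) ^+ g * \prod_(i < 4) toAG (M i (g i)).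
Proof.
rewrite /kg_det4 toAG_flatten big_map big_enum /=.
under eq_bigl do rewrite in_setT.
apply: eq_bigr => g _; rewrite toAG_scale !rmorph_sign.
by rewrite (big_morph toAG toAG_mul (rmorph1 _)).
Qed.

Section CharNot2.
Hypothesis two_neq0 : (2%:R : K) != 0.

Lemma halfKG_2 : kscal G (1 / 2%:R : K) * 2%:R = 1.
Proof. by rewrite -(rmorph_nat (kscal G)) -rmorphM mul1r mulVf // rmorph1. Qed.

Lemma halfAG_2 : halfAG * 2%:R = 1.
Proof. by rewrite -(rmorph_nat piAG) -rmorphM halfKG_2 rmorph1. Qed.

(* In A_G symmetric elements are central: writing a = s + (a - a^* )/2 with
   s symmetric in kappa G, a b - b a = [s, b] + [(a - a^* )/2, b] lies in I. *)
Lemma symAG_central x y : starAG x = x -> x * y = y * x.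
Proof.
elim/piAG_surj: x => a; elim/piAG_surj: y => b.
rewrite starAG_pi => /eqP; rewrite -subr_eq0 -rmorphB => /eqP/ideal_pi_eq0 Id.
apply/eqP; rewrite -subr_eq0 -!rmorphM -rmorphB; apply/eqP/ideal_pi_eq0.
pose h := kscal G (1 / 2%:R : K).
pose s := h * (a + starKG a); pose d := a - starKG a.
have ea : a = s + h * d.
  rewrite /s /d -mulrDr addrACA subrr addr0 -mulr2n -mulr_natr mulrA.
  by rewrite kscal_central -mulrA halfKG_2 mulr1.
have ss : starKG s = s.
  rewrite /s starKG_M (stD (@starKG_B K G)) starKG_K starKG_scal.
  by rewrite addrC kscal_central.
have Id' : I d by rewrite /d -opprB; apply: (idealN (@sci_mull K G)).
clearbody s d; rewrite ea mulrDl mulrDr opprD addrACA; apply: SCIadd.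
  rewrite -opprB; apply: (idealN (@sci_mull K G)).
  by rewrite -[b * s - s * b]mul1r -[1 * _]mulr1; apply: SCIgen.
apply: SCIadd; first by apply: sci_mulr; apply: sci_mull.
by apply: (idealN (@sci_mull K G)); apply: sci_mull; apply: sci_mull.
Qed.

End CharNot2.

End GroupAlgebraQuotient.

Theorem mainTheorem9 (K : fieldType) (G : groupType)
  (hchar : [pchar K] =i pred0)
  (x y z w u v s t : KG K G) :
  inLambda x -> inLambda y -> inLambda z -> inLambda w ->
  inLambda u -> inLambda v -> inLambda s -> inLambda t ->
  inI (kg_det4 (fun i j => kg_dot (nth [::] [:: x; y; z; w] i)
                                  (nth [::] [:: u; v; s; t] j))).
Proof.
move=> /inLambda_skew sx /inLambda_skew sy /inLambda_skew sz /inLambda_skew sw.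
move=> /inLambda_skew su /inLambda_skew sv /inLambda_skew ss /inLambda_skew st'.
have two_neq0 : (2%:R : K) != 0.
  by apply/negP => /eqP two0; have := hchar 2; rewrite !inE /= two0 eqxx.
apply/toAG_eq0; rewrite toAG_det4.
under eq_bigr do under eq_bigr do rewrite toAG_dot !toAG_nth /=.
exact: (gram4_leibniz (@starAG_B K G) (@starAG_M K G) (@starAG_1 K G)
  (symAG_central two_neq0) (halfAG_2 G two_neq0) sx sy sz sw su sv ss st').
Qed.
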